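(* There exist a joint distribution $P$ of $(x,a,y)$ with two protected groups $a\in\{1,2\}$ and binary labels $y\in\{0,1\}$, a score function $\mathcal{R}$ that is Bayes-optimal for each protected group, i.e. $\mathcal{R}(x,a)=P(y=1\mid x,a)$, and a choice of bias measure $\mathcal{B}$ (demographic parity or equal opportunity) such that the post-processing method restricted to deterministic thresholds (described in the context), with loss equal to the misclassification rate, is not slack-consistent: there is an individual $(x,a)$ and slacks $0<\beta_1<\beta_2<\beta_3$ such that $f_{\beta_1}(x,a), f_{\beta_2}(x,a), f_{\beta_3}(x,a)$ are neither non-decreasing nor non-increasing.
   Context: Setting: individuals are pairs $(x,a)$ with features $x$ and group $a\in\{1,2\}$, label $y\in\{0,1\}$, distributed according to $P$. A classifier $f$ assigns each $(x,a)$ a prediction $f(x,a)\in\{0,1\}$ (more generally a probability in $[0,1]$). Demographic-parity bias: $\mathcal{B}(f)=E[f(x,a)\mid a=1]-E[f(x,a)\mid a=2]$. Equal-opportunity bias: $\mathcal{B}(f)=E[f(x,a)\mid a=1,y=1]-E[f(x,a)\mid a=2,y=1]$. Misclassification loss $\mathcal{L}(f)=P(f(x,a)\neq y)$. Post-processing with deterministic thresholds and slack $\beta>0$: a pair of thresholds $(t_1,t_2)$ defines the classifier $f(x,a)=\mathbb{1}[\mathcal{R}(x,a)\ge t_a]$; among all such pairs minimizing $\mathcal{L}$ subject to $|\mathcal{B}|\le\beta$, keep those with smallest $|\mathcal{B}|$, then those with lowest threshold for group 1 (equivalently, largest positive rate in group 1 being excluded—i.e. smallest $t_1$ in the sense of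 the normalized threshold ordering), then return the one with lowest threshold for group 2. The returned classifier is $f_\beta$. Slack-consistency: for every individual $(x,a)$, the map $\beta\mapsto f_\beta(x,a)$ is monotonic in $\beta>0$. *)

From HB Require Import structures.
From mathcomp Require Import all_boot all_order all_algebra.
From mathcomp Require Import Rstruct.
From Stdlib Require Import Rdefinitions.
Notation R := Rdefinitions.R.

Set Implicit Arguments. Unset Strict Implicit. Unset Printing Implicit Defensive.
Import Order.TTheory GRing.Theory Num.Theory.
Local Open Scope ring_scope.

(* Conventions:
   - features x range over a finite type X;
   - group a : bool, with  true = group 1  and  false = group 2;
   - label y : bool, with  true = (y = 1)  and  false = (y = 0);
   - P x a y = probability mass of (x,a,y). *)

Definition is_dist (X : finType) (P : X -> bool -> bool -> R) : Prop :=
  (forall x a y, 0 <= P x a y) /\ \sum_(x : X) \sum_(a : bool) \sum_(y : bool) P x a y = 1.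

Definition pXA (X : finType) (P : X -> bool -> bool -> R) (x : X) (a : bool) : R :=
  P x a true + P x a false.

Definition pA (X : finType) (P : X -> bool -> bool -> R) (a : bool) : R :=
  \sum_(x : X) pXA P x a.

Definition pAY1 (X : finType) (P : X -> bool -> bool -> R) (a : bool) : R :=
  \sum_(x : X) P x a true.

Definition bayes_optimal (X : finType) (P : X -> bool -> bool -> R)
  (Rs : X -> bool -> R) : Prop :=
  forall x a, 0 < pXA P x a -> Rs x a = P x a true / pXA P x a.

Definition thr_clf (X : finType) (Rs : X -> bool -> R) (t : bool -> R)
  (x : X) (a : bool) : R :=
  if t a <= Rs x a then 1 else 0.

Definition pos_rate (X : finType) (P : X -> bool -> bool -> R) (f : X -> bool -> R)
  (a : bool) : R :=
  (\sum_(x : X) pXA P x a * f x a) / pA P a.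

Definition tp_rate (X : finType) (P : X -> bool -> bool -> R) (f : X -> bool -> R)
  (a : bool) : R :=
  (\sum_(x : X) P x a true * f x a) / pAY1 P a.

Inductive bias_kind := DemographicParity | EqualOpportunity.

Definition bias (X : finType) (P : X -> bool -> bool -> R) (B : bias_kind)
  (f : X -> bool -> R) : R :=
  match B with
  | DemographicParity => pos_rate P f true - pos_rate P f false
  | EqualOpportunity => tp_rate P f true - tp_rate P f false
  end.

Definition misclass (X : finType) (P : X -> bool -> bool -> R) (f : X -> bool -> R) : R :=
  \sum_(x : X) \sum_(a : bool) \sum_(y : bool)
     P x a y * (if f x a == (if y then 1 else 0) then 0 else 1).

Definition feasible (X : finType) (P : X -> bool -> bool -> R) (Rs : X -> bool -> R)
  (B : bias_kind) (beta : R) (t : bool -> R) : Prop :=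
  `|bias P B (thr_clf Rs t)| <= beta.

(* "t is at least as good as t'" in the selection order of the post-processing:
   lower loss; then smaller |bias|; then lower group-1 threshold (= larger
   group-1 positive rate, normalized threshold ordering); then lower group-2
   threshold (= larger group-2 positive rate). *)
Definition sel_le (X : finType) (P : X -> bool -> bool -> R) (Rs : X -> bool -> R)
  (B : bias_kind) (t t' : bool -> R) : Prop :=
  let f := thr_clf Rs t in let f' := thr_clf Rs t' in
  misclass P f < misclass P f' \/
  (misclass P f = misclass P f' /\
   (`|bias P B f| < `|bias P B f'| \/
    (`|bias P B f| = `|bias P B f'| /\
     (pos_rate P f' true < pos_rate P f true \/
      (pos_rate P f true = pos_rate P f' true /\
       pos_rate P f' false <= pos_rate P f false))))).

Definition selected (X : finType) (P : X -> bool -> bool -> R) (Rs : X -> bool -> R)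
  (B : bias_kind) (beta : R) (t : bool -> R) : Prop :=
  feasible P Rs B beta t /\
  forall t', feasible P Rs B beta t' -> sel_le P Rs B t t'.

Definition non_monotone3 (v1 v2 v3 : R) : Prop :=
  ~ (v1 <= v2 /\ v2 <= v3) /\ ~ (v3 <= v2 /\ v2 <= v1).

From mathcomp Require Import all_boot all_order all_algebra.
From mathcomp Require Import Rstruct.
From mathcomp Require Import ring lra.
Import Order.TTheory GRing.Theory Num.Theory.
Local Open Scope ring_scope.

(* The example has two feature values per group, a low-scored one (x = true)
   and a high-scored one (x = false), so a deterministic threshold accepts
   either nobody (N), only the high-scored individuals (T), or all (A) of its
   group.  The nine resulting classifiers have misclassification (in 39ths)
   and demographic-parity bias
     (A,A) 17, 0      (A,T) 14, 5/8     (A,N) 15, 1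
     (T,A) 18, -1/5   (T,T) 15, 17/40   (T,N) 16, 4/5
     (N,A) 24, -1     (N,T) 21, -3/8    (N,N) 22, 0
   so the loss-optimal feasible classifier is (A,A) at slack 1/10, (T,T) at
   1/2 and (A,T) at 7/10: the low-scored individual of group 1 is accepted,
   rejected, then accepted again. *)

Section ThresholdPostProcessing.
Variables (X : finType) (P : X -> bool -> bool -> R) (Rs : X -> bool -> R).

Lemma misclass_thr_clf t :
  misclass P (thr_clf Rs t) =
  \sum_(x : X) \sum_(a : bool) (if t a <= Rs x a then P x a false else P x a true).
Proof.
apply: eq_bigr => x _; apply: eq_bigr => a _.
rewrite big_bool /= /thr_clf; case: (t a <= Rs x a).
- by rewrite eqxx (negbTE (oner_neq0 _)) mulr0 mulr1 add0r.
- by rewrite eqxx eq_sym (negbTE (oner_neq0 _)) mulr0 mulr1 addr0.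
Qed.

Lemma pos_rate_thr_clf t a :
  pos_rate P (thr_clf Rs t) a = (\sum_(x | t a <= Rs x a) pXA P x a) / pA P a.
Proof.
rewrite /pos_rate; congr (_ / _); rewrite [RHS]big_mkcond; apply: eq_bigr => x _.
by rewrite /thr_clf; case: ifP; rewrite ?mulr1 ?mulr0.
Qed.

Variable B : bias_kind.

Lemma selected_of_min beta t :
  feasible P Rs B beta t ->
  (forall t', feasible P Rs B beta t' ->
     let f := thr_clf Rs t in let f' := thr_clf Rs t' in
     misclass P f < misclass P f' \/
     [/\ misclass P f' = misclass P f, bias P B f' = bias P B f,
         pos_rate P f' true = pos_rate P f true
       & pos_rate P f' false = pos_rate P f false]) ->
  selected P Rs B beta t.
Proof.
move=> feas_t min_t; split=> // t' /min_t /=; rewrite /sel_le /=.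
case=> [lt_loss | [-> -> -> ->]]; first by left.
by right; split=> //; right; split=> //; right.
Qed.

End ThresholdPostProcessing.

Definition count0 (x a y : bool) : nat :=
  match a, x, y with
  | true, true, true => 2 | true, true, false => 1
  | true, false, true => 9 | true, false, false => 3
  | false, true, true => 6 | false, true, false => 9
  | false, false, true => 5 | false, false, false => 4
  end.

Definition P0 (x a y : bool) : R := (count0 x a y)%:R / 39.

Definition score0 (x a : bool) : R :=
  match a, x with
  | true, true => 2 / 3 | true, false => 3 / 4
  | false, true => 2 / 5 | false, false => 5 / 9
  end.

Arguments score0 : simpl never.

Lemma is_dist_P0 : is_dist P0.
Proof.
split=> [x a y|]; first by rewrite /P0 divr_ge0.
by rewrite !big_bool /P0 /= ?RplusE; lra.
Qed.

Lemma bayes_optimal_score0 : bayes_optimal P0 score0.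
Proof. by move=> x a _; rewrite /pXA /P0; case: x; case: a; rewrite /score0 /= ?RplusE; field. Qed.

Lemma pA_P0 a : pA P0 a = if a then 15 / 39 else 24 / 39.
Proof. by rewrite /pA /pXA big_bool /P0; case: a; rewrite /= ?RplusE; lra. Qed.

Lemma pAY1_P0 a : pAY1 P0 a = 11 / 39.
Proof. by rewrite /pAY1 big_bool /P0; case: a; rewrite /= ?RplusE; lra. Qed.

Lemma lt_score0 a : score0 true a < score0 false a.
Proof. by case: a; rewrite /score0; lra. Qed.

Lemma le_score0 a x y : (score0 x a <= score0 y a) = (y ==> x).
Proof.
have lt_a := lt_score0 a.
by case: x; case: y; rewrite /= ?lexx ?(ltW lt_a) // leNgt lt_a.
Qed.

Lemma misclass_P0 t :
  misclass P0 (thr_clf score0 t) =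
  ((if t true <= score0 true true then 1 else 2) +
   (if t true <= score0 false true then 3 else 9) +
   (if t false <= score0 true false then 9 else 6) +
   (if t false <= score0 false false then 4 else 5)) / 39.
Proof.
rewrite misclass_thr_clf !big_bool /P0 /=.
by case: (t true <= _); case: (t true <= _); case: (t false <= _); case: (t false <= _);
  rewrite ?RplusE; lra.
Qed.

Lemma pos_rate_P0 t a :
  pos_rate P0 (thr_clf score0 t) a =
  if a then ((if t true <= score0 true true then 3 else 0) +
             (if t true <= score0 false true then 12 else 0)) / 15
  else ((if t false <= score0 true false then 15 else 0) +
        (if t false <= score0 false false then 9 else 0)) / 24.
Proof.
rewrite pos_rate_thr_clf pA_P0 big_mkcond big_bool /pXA /P0.
by case: a => /=; case: (t _ <= _); case: (t _ <= _); rewrite ?RplusE; field.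
Qed.

Lemma decisions_score0 t a :
  let d := (t a <= score0 true a, t a <= score0 false a) in
  [\/ d = (false, false), d = (false, true) | d = (true, true)].
Proof.
have up : (t a <= score0 true a) ==> (t a <= score0 false a).
  by apply/implyP => /le_trans; apply; apply/ltW/lt_score0.
by move: up; case: (t a <= score0 true a); case: (t a <= score0 false a) => // _; constructor.
Qed.

Definition thr_at (k : bool -> bool) (a : bool) : R := score0 (k a) a.

Lemma selected_thr_at :
  [/\ selected P0 score0 DemographicParity (1 / 10) (thr_at (fun=> true)),
      selected P0 score0 DemographicParity (1 / 2) (thr_at (fun=> false))
    & selected P0 score0 DemographicParity (7 / 10) (thr_at id)].
Proof.
split; apply: selected_of_min => [|t];
  rewrite /feasible /bias ?misclass_P0 !pos_rate_P0 /thr_at !le_score0 /= ?RminusE ler_norml.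
all: try by apply/andP; split; lra.
all: case: (decisions_score0 t true) => -[-> ->]; case: (decisions_score0 t false) => -[-> ->].
all: by case/andP=> lo hi; first [left; lra | right; split; lra].
Qed.

Lemma thr_clf_thr_at k x a : thr_clf score0 (thr_at k) x a = if x ==> k a then 1 else 0.
Proof. by rewrite /thr_clf /thr_at le_score0. Qed.

Theorem theorem2 :
  exists (X : finType) (P : X -> bool -> bool -> R) (Rs : X -> bool -> R)
         (B : bias_kind),
    is_dist P /\
    (forall a, 0 < pA P a) /\ (forall a, 0 < pAY1 P a) /\
    bayes_optimal P Rs /\
    exists (x : X) (a : bool) (beta1 beta2 beta3 : R) (t1 t2 t3 : bool -> R),
      0 < pXA P x a /\
      0 < beta1 /\ beta1 < beta2 /\ beta2 < beta3 /\
      selected P Rs B beta1 t1 /\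
      selected P Rs B beta2 t2 /\
      selected P Rs B beta3 t3 /\
      non_monotone3 (thr_clf Rs t1 x a) (thr_clf Rs t2 x a) (thr_clf Rs t3 x a).
Proof.
exists bool, P0, score0, DemographicParity.
split; first exact: is_dist_P0.
split; first by move=> a; rewrite pA_P0; case: a; lra.
split; first by move=> a; rewrite pAY1_P0; lra.
split; first exact: bayes_optimal_score0.
exists true, true, (1 / 10), (1 / 2), (7 / 10), (thr_at (fun=> true)), (thr_at (fun=> false)), (thr_at id).
split; first by rewrite /pXA /P0 /= ?RplusE; lra.
do 3 (split; first lra).
have [sel1 sel2 sel3] := selected_thr_at.
do 3 (split; first by []).
by rewrite !thr_clf_thr_at /non_monotone3 /=; lra.
Qed.
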